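(* Let $1\le i,j,a\le n$ with $i<j$. Then in ${\boldsymbol U}_{v}(\mathfrak q_n)$: \[ \mathsf K_{\bar a}\mathsf E_{i,j}=\begin{cases}\mathsf E_{i,j}\mathsf K_{\bar a} & (a<i\text{ or } i<a<j\text{ or }a>j),\\ v\mathsf E_{i,j}\mathsf K_{\bar i}-\mathsf E_{\bar i}\mathsf E_{i+1,j}\mathsf K_i^{-1}+v^{-1}\mathsf E_{i+1,j}\mathsf E_{\bar i}\mathsf K_i^{-1} & (a=i,\ j>i+1),\\ v^{-1}\mathsf E_{i,j}\mathsf K_{\bar j}-\overline{\mathsf E}_{i,j}\mathsf K_j^{-1} & (a=j);\end{cases} \] \[ \mathsf K_{\bar a}\overline{\mathsf E}_{i,j}=\begin{cases}-\overline{\mathsf E}_{i,j}\mathsf K_{\bar a} & (a<i\text{ or } i<a<j\text{ or }a>j),\\ -v\overline{\mathsf E}_{i,j}\mathsf K_{\bar i}-\mathsf E_{\bar i}\overline{\mathsf E}_{i+1,j}\mathsf K_i^{-1}-v^{-1}\overline{\mathsf E}_{i+1,j}\mathsf E_{\bar i}\mathsf K_i^{-1} & (a=i,\ j>i+1),\\ -v^{-1}\overline{\mathsf E}_{i,j}\mathsf K_{\bar j}+\mathsf E_{i,j}\mathsf K_j^{-1} & (a=j).\end{cases} \]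
   Context: Let $v$ be an indeterminate. The quantum queer superalgebra ${\boldsymbol U}_{v}(\mathfrak q_n)$ is the associative superalgebra over $\mathbb Q(v)$ generated by even generators $\mathsf K_i,\mathsf K_i^{-1}$ ($1\le i\le n$), $\mathsf E_j,\mathsf F_j$ ($1\le j\le n-1$) and odd generators $\mathsf K_{\bar i}$ ($1\le i\le n$), $\mathsf E_{\bar j},\mathsf F_{\bar j}$ ($1\le j\le n-1$), subject to the following relations (indices are taken only where they make sense), where $(\epsilon_i,\alpha_j)=\delta_{i,j}-\delta_{i,j+1}$: (QQ1) $\mathsf K_i\mathsf K_i^{-1}=\mathsf K_i^{-1}\mathsf K_i=1$, $\mathsf K_i\mathsf K_j=\mathsf K_j\mathsf K_i$, $\mathsf K_i\mathsf K_{\bar j}=\mathsf K_{\bar j}\mathsf K_i$, $\mathsf K_{\bar i}\mathsf K_{\bar j}+\mathsf K_{\bar j}\mathsf K_{\bar i}=2\delta_{i,j}\frac{\mathsf K_i^2-\mathsf K_i^{-2}}{v^2-v^{-2}}$. (QQ2) $\mathsf K_i\mathsf E_j=v^{(\epsilon_i,\alpha_j)}\mathsf E_j\mathsf K_i$, $\mathsf K_i\mathsf E_{\bar j}=v^{(\epsilon_i,\alpha_j)}\mathsf E_{\bar j}\mathsf K_i$, $\mathsf K_i\mathsf F_j=v^{-(\epsilon_i,\alpha_j)}\mathsf F_j\mathsf K_i$, $\mathsf K_i\mathsf F_{\bar j}=v^{-(\epsilon_i,\alpha_j)}\mathsf F_{\bar j}\mathsf K_i$. (QQ3) $\mathsf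 K_{\bar i}\mathsf E_i-v\mathsf E_i\mathsf K_{\bar i}=\mathsf E_{\bar i}\mathsf K_i^{-1}$, $v\mathsf K_{\bar i}\mathsf E_{i-1}-\mathsf E_{i-1}\mathsf K_{\bar i}=-\mathsf K_i^{-1}\mathsf E_{\overline{i-1}}$, $\mathsf K_{\bar i}\mathsf F_i-v\mathsf F_i\mathsf K_{\bar i}=-\mathsf F_{\bar i}\mathsf K_i$, $v\mathsf K_{\bar i}\mathsf F_{i-1}-\mathsf F_{i-1}\mathsf K_{\bar i}=\mathsf K_i\mathsf F_{\overline{i-1}}$, $\mathsf K_{\bar i}\mathsf E_{\bar i}+v\mathsf E_{\bar i}\mathsf K_{\bar i}=\mathsf E_i\mathsf K_i^{-1}$, $v\mathsf K_{\bar i}\mathsf E_{\overline{i-1}}+\mathsf E_{\overline{i-1}}\mathsf K_{\bar i}=\mathsf K_i^{-1}\mathsf E_{i-1}$, $\mathsf K_{\bar i}\mathsf F_{\bar i}+v\mathsf F_{\bar i}\mathsf K_{\bar i}=\mathsf F_i\mathsf K_i$, $v\mathsf K_{\bar i}\mathsf F_{\overline{i-1}}+\mathsf F_{\overline{i-1}}\mathsf K_{\bar i}=\mathsf K_i\mathsf F_{i-1}$, and for $j\ne i,i-1$: $\mathsf K_{\bar i}\mathsf E_j=\mathsf E_j\mathsf K_{\bar i}$, $\mathsf K_{\bar i}\mathsf F_j=\mathsf F_j\mathsf K_{\bar i}$, $\mathsf K_{\bar i}\mathsf E_{\bar j}=-\mathsf E_{\bar j}\mathsf K_{\bar i}$,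 $\mathsf K_{\bar i}\mathsf F_{\bar j}=-\mathsf F_{\bar j}\mathsf K_{\bar i}$. (QQ4) $\mathsf E_i\mathsf F_j-\mathsf F_j\mathsf E_i=\delta_{i,j}\frac{\mathsf K_i\mathsf K_{i+1}^{-1}-\mathsf K_i^{-1}\mathsf K_{i+1}}{v-v^{-1}}$, $\mathsf E_{\bar i}\mathsf F_{\bar j}+\mathsf F_{\bar j}\mathsf E_{\bar i}=\delta_{i,j}\big(\frac{\mathsf K_i\mathsf K_{i+1}-\mathsf K_i^{-1}\mathsf K_{i+1}^{-1}}{v-v^{-1}}+(v-v^{-1})\mathsf K_{\bar i}\mathsf K_{\overline{i+1}}\big)$, $\mathsf E_i\mathsf F_{\bar j}-\mathsf F_{\bar j}\mathsf E_i=\delta_{i,j}(\mathsf K_{i+1}^{-1}\mathsf K_{\bar i}-\mathsf K_{\overline{i+1}}\mathsf K_i^{-1})$, $\mathsf E_{\bar i}\mathsf F_j-\mathsf F_j\mathsf E_{\bar i}=\delta_{i,j}(\mathsf K_{i+1}\mathsf K_{\bar i}-\mathsf K_{\overline{i+1}}\mathsf K_i)$. (QQ5) $\mathsf E_{\bar i}^2=-\frac{v-v^{-1}}{v+v^{-1}}\mathsf E_i^2$, $\mathsf F_{\bar i}^2=\frac{v-v^{-1}}{v+v^{-1}}\mathsf F_i^2$; for $|i-j|\ne1$: $\mathsf E_i\mathsf E_{\bar j}=\mathsf E_{\bar j}\mathsf E_i$, $\mathsf F_i\mathsf F_{\bar j}=\mathsf F_{\bar j}\mathsf F_i$; for $|i-j|>1$: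 $\mathsf E_i\mathsf E_j=\mathsf E_j\mathsf E_i$, $\mathsf F_i\mathsf F_j=\mathsf F_j\mathsf F_i$, $\mathsf E_{\bar i}\mathsf E_{\bar j}=-\mathsf E_{\bar j}\mathsf E_{\bar i}$, $\mathsf F_{\bar i}\mathsf F_{\bar j}=-\mathsf F_{\bar j}\mathsf F_{\bar i}$; $\mathsf E_i\mathsf E_{i+1}-v\mathsf E_{i+1}\mathsf E_i=\mathsf E_{\bar i}\mathsf E_{\overline{i+1}}+v\mathsf E_{\overline{i+1}}\mathsf E_{\bar i}$, $\mathsf E_i\mathsf E_{\overline{i+1}}-v\mathsf E_{\overline{i+1}}\mathsf E_i=\mathsf E_{\bar i}\mathsf E_{i+1}-v\mathsf E_{i+1}\mathsf E_{\bar i}$, $\mathsf F_i\mathsf F_{i+1}-v\mathsf F_{i+1}\mathsf F_i=-(\mathsf F_{\bar i}\mathsf F_{\overline{i+1}}+v\mathsf F_{\overline{i+1}}\mathsf F_{\bar i})$, $\mathsf F_i\mathsf F_{\overline{i+1}}-v\mathsf F_{\overline{i+1}}\mathsf F_i=\mathsf F_{\bar i}\mathsf F_{i+1}-v\mathsf F_{i+1}\mathsf F_{\bar i}$. (QQ6) for $|i-j|=1$: $\mathsf E_i^2X-(v+v^{-1})\mathsf E_iX\mathsf E_i+X\mathsf E_i^2=0$ for $X\in\{\mathsf E_j,\mathsf E_{\bar j}\}$ and $\mathsf F_i^2Y-(v+v^{-1})\mathsf F_iY\mathsf F_i+Y\mathsf F_i^2=0$ for $Y\in\{\mathsf F_j,\mathsf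 F_{\bar j}\}$. Quantum root vectors: for $1\le i\le n-1$ put $\mathsf E_{i,i+1}=\mathsf E_i$, $\overline{\mathsf E}_{i,i+1}=\mathsf E_{\bar i}$, $\mathsf E_{i+1,i}=\mathsf F_i$, $\overline{\mathsf E}_{i+1,i}=\mathsf F_{\bar i}$, and recursively for $i+1<j\le n$: $\mathsf E_{i,j}=-\mathsf E_{i,j-1}\mathsf E_{j-1}+v^{-1}\mathsf E_{j-1}\mathsf E_{i,j-1}$, $\overline{\mathsf E}_{i,j}=-\mathsf E_{i,j-1}\mathsf E_{\overline{j-1}}+v^{-1}\mathsf E_{\overline{j-1}}\mathsf E_{i,j-1}$, $\mathsf E_{j,i}=-\mathsf F_{j-1}\mathsf E_{j-1,i}+v\mathsf E_{j-1,i}\mathsf F_{j-1}$, $\overline{\mathsf E}_{j,i}=-\mathsf F_{\overline{j-1}}\mathsf E_{j-1,i}+v\mathsf E_{j-1,i}\mathsf F_{\overline{j-1}}$. *)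

From HB Require Import structures.
From mathcomp Require Import all_boot all_order all_algebra fraction.
Set Implicit Arguments. Unset Strict Implicit. Unset Printing Implicit Defensive.
Import Order.TTheory GRing.Theory Num.Theory.
Local Open Scope ring_scope.

Definition Qv : fieldType := {fraction {poly rat}}.
Definition qv : Qv := @FracField.tofrac _ ('X : {poly rat}).

(* (eps_i, alpha_j) = delta_{i,j} - delta_{i,j+1} *)
Definition epsal (i j : nat) : int := (i == j)%:Z - (i == j.+1)%:Z.

Section Rels.
Variable A : algType Qv.
Variable n : nat.
Variables (K Ki Kb E Eb F Fb : nat -> A).
(* K i = K_i, Ki i = K_i^{-1}, Kb i = K_{bar i}, E j = E_j, Eb j = E_{bar j},
   F j = F_j, Fb j = F_{bar j}. Indices are 1-based: K for 1<=i<=n, E,F for 1<=j<=n-1. *)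

Record qqn_rels : Prop := QQRels {
 qq1_inv : forall i, (1 <= i <= n)%N -> K i * Ki i = 1 /\ Ki i * K i = 1;
 qq1_KK : forall i j, (1 <= i <= n)%N -> (1 <= j <= n)%N -> K i * K j = K j * K i;
 qq1_KKb : forall i j, (1 <= i <= n)%N -> (1 <= j <= n)%N -> K i * Kb j = Kb j * K i;
 qq1_KbKb : forall i j, (1 <= i <= n)%N -> (1 <= j <= n)%N ->
   Kb i * Kb j + Kb j * Kb i
   = ((i == j)%:R *+ 2 * (qv ^+ 2 - qv ^- 2)^-1) *: (K i ^+ 2 - Ki i ^+ 2);
 qq2_E : forall i j, (1 <= i <= n)%N -> (1 <= j <= n.-1)%N ->
   K i * E j = qv ^ epsal i j *: (E j * K i);
 qq2_Eb : forall i j, (1 <= i <= n)%N -> (1 <= j <= n.-1)%N ->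
   K i * Eb j = qv ^ epsal i j *: (Eb j * K i);
 qq2_F : forall i j, (1 <= i <= n)%N -> (1 <= j <= n.-1)%N ->
   K i * F j = qv ^ (- epsal i j) *: (F j * K i);
 qq2_Fb : forall i j, (1 <= i <= n)%N -> (1 <= j <= n.-1)%N ->
   K i * Fb j = qv ^ (- epsal i j) *: (Fb j * K i);
 qq3_1 : forall i, (1 <= i <= n.-1)%N -> Kb i * E i - qv *: (E i * Kb i) = Eb i * Ki i;
 qq3_2 : forall i, (2 <= i <= n)%N ->
   qv *: (Kb i * E i.-1) - E i.-1 * Kb i = - (Ki i * Eb i.-1);
 qq3_3 : forall i, (1 <= i <= n.-1)%N -> Kb i * F i - qv *: (F i * Kb i) = - (Fb i * K i);
 qq3_4 : forall i, (2 <= i <= n)%N ->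
   qv *: (Kb i * F i.-1) - F i.-1 * Kb i = K i * Fb i.-1;
 qq3_5 : forall i, (1 <= i <= n.-1)%N -> Kb i * Eb i + qv *: (Eb i * Kb i) = E i * Ki i;
 qq3_6 : forall i, (2 <= i <= n)%N ->
   qv *: (Kb i * Eb i.-1) + Eb i.-1 * Kb i = Ki i * E i.-1;
 qq3_7 : forall i, (1 <= i <= n.-1)%N -> Kb i * Fb i + qv *: (Fb i * Kb i) = F i * K i;
 qq3_8 : forall i, (2 <= i <= n)%N ->
   qv *: (Kb i * Fb i.-1) + Fb i.-1 * Kb i = K i * F i.-1;
 qq3_9 : forall i j, (1 <= i <= n)%N -> (1 <= j <= n.-1)%N -> j != i -> j.+1 != i ->
   [/\ Kb i * E j = E j * Kb i, Kb i * F j = F j * Kb i,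
       Kb i * Eb j = - (Eb j * Kb i) & Kb i * Fb j = - (Fb j * Kb i)];
 qq4_1 : forall i j, (1 <= i <= n.-1)%N -> (1 <= j <= n.-1)%N ->
   E i * F j - F j * E i
   = (i == j)%:R *: ((qv - qv^-1)^-1 *: (K i * Ki i.+1 - Ki i * K i.+1));
 qq4_2 : forall i j, (1 <= i <= n.-1)%N -> (1 <= j <= n.-1)%N ->
   Eb i * Fb j + Fb j * Eb i
   = (i == j)%:R *: ((qv - qv^-1)^-1 *: (K i * K i.+1 - Ki i * Ki i.+1)
                     + (qv - qv^-1) *: (Kb i * Kb i.+1));
 qq4_3 : forall i j, (1 <= i <= n.-1)%N -> (1 <= j <= n.-1)%N ->
   E i * Fb j - Fb j * E i = (i == j)%:R *: (Ki i.+1 * Kb i - Kb i.+1 * Ki i);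
 qq4_4 : forall i j, (1 <= i <= n.-1)%N -> (1 <= j <= n.-1)%N ->
   Eb i * F j - F j * Eb i = (i == j)%:R *: (K i.+1 * Kb i - Kb i.+1 * K i);
 qq5_Eb2 : forall i, (1 <= i <= n.-1)%N ->
   Eb i ^+ 2 = - ((qv - qv^-1) / (qv + qv^-1)) *: E i ^+ 2;
 qq5_Fb2 : forall i, (1 <= i <= n.-1)%N ->
   Fb i ^+ 2 = ((qv - qv^-1) / (qv + qv^-1)) *: F i ^+ 2;
 qq5_EEb : forall i j, (1 <= i <= n.-1)%N -> (1 <= j <= n.-1)%N ->
   i != j.+1 -> j != i.+1 -> E i * Eb j = Eb j * E i /\ F i * Fb j = Fb j * F i;
 qq5_far : forall i j, (1 <= i <= n.-1)%N -> (1 <= j <= n.-1)%N ->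
   (i.+1 < j)%N || (j.+1 < i)%N ->
   [/\ E i * E j = E j * E i, F i * F j = F j * F i,
       Eb i * Eb j = - (Eb j * Eb i) & Fb i * Fb j = - (Fb j * Fb i)];
 qq5_1 : forall i, (1 <= i)%N -> (i.+1 <= n.-1)%N ->
   E i * E i.+1 - qv *: (E i.+1 * E i) = Eb i * Eb i.+1 + qv *: (Eb i.+1 * Eb i);
 qq5_2 : forall i, (1 <= i)%N -> (i.+1 <= n.-1)%N ->
   E i * Eb i.+1 - qv *: (Eb i.+1 * E i) = Eb i * E i.+1 - qv *: (E i.+1 * Eb i);
 qq5_3 : forall i, (1 <= i)%N -> (i.+1 <= n.-1)%N ->
   F i * F i.+1 - qv *: (F i.+1 * F i) = - (Fb i * Fb i.+1 + qv *: (Fb i.+1 * Fb i));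
 qq5_4 : forall i, (1 <= i)%N -> (i.+1 <= n.-1)%N ->
   F i * Fb i.+1 - qv *: (Fb i.+1 * F i) = Fb i * F i.+1 - qv *: (F i.+1 * Fb i);
 qq6_E : forall i j, (1 <= i <= n.-1)%N -> (1 <= j <= n.-1)%N ->
   (i == j.+1) || (j == i.+1) ->
   forall X, (X = E j \/ X = Eb j) ->
   E i ^+ 2 * X - (qv + qv^-1) *: (E i * X * E i) + X * E i ^+ 2 = 0;
 qq6_F : forall i j, (1 <= i <= n.-1)%N -> (1 <= j <= n.-1)%N ->
   (i == j.+1) || (j == i.+1) ->
   forall Y, (Y = F j \/ Y = Fb j) ->
   F i ^+ 2 * Y - (qv + qv^-1) *: (F i * Y * F i) + Y * F i ^+ 2 = 0
}.

(* Quantum root vectors E_{i,i+1+k} and bar E_{i,i+1+k}. *)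
Fixpoint Eroot (i k : nat) : A :=
  match k with
  | 0 => E i
  | k'.+1 => - (Eroot i k' * E (i + k)) + qv^-1 *: (E (i + k) * Eroot i k')
  end.

Fixpoint Ebroot (i k : nat) : A :=
  match k with
  | 0 => Eb i
  | k'.+1 => - (Eroot i k' * Eb (i + k)) + qv^-1 *: (Eb (i + k) * Eroot i k')
  end.

Definition Eij (i j : nat) : A := Eroot i (j - i).-1.
Definition Ebij (i j : nat) : A := Ebroot i (j - i).-1.

End Rels.

From HB Require Import structures.
From mathcomp Require Import all_boot all_order all_algebra.
From mathcomp Require Import fraction ring zify.
Import Order.TTheory GRing.Theory Num.Theory.
Set Implicit Arguments. Unset Strict Implicit. Unset Printing Implicit Defensive.
Local Open Scope ring_scope.

(* Write T x y = - x y + v^-1 y x, so that E_{i,j+1} = T E_{i,j} E_j and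
   bar E_{i,j+1} = T E_{i,j} bar E_j.  If kb x = p x kb + P and kb y = q y kb + Q, then
   kb (T x y) = p q (T x y) kb + (a correction built from P and Q).  The relations QQ2,
   QQ3 say how bar K_a and K_a^-1 pass the generators E_m, bar E_m, and each case of the
   lemma follows by induction on j.  For i < a < j one more ingredient is needed when
   E_a is appended to E_{i,a}: the two corrections cancel because of the relation
   E_{i,a} bar E_a - v bar E_a E_{i,a} = bar E_{i,a} E_a - v E_a bar E_{i,a},
   which E_{i,a} inherits from QQ5 for E_{a-1}, since the earlier generators commute
   with E_a and bar E_a. *)

Section LinearCombination.
Variables (R : comRingType) (V : lmodType R).

Inductive lexpr :=
  | LAtom of nat | LScale of R & lexpr | LAdd of lexpr & lexpr | LOpp of lexpr | LZero.

Fixpoint leval (atoms : seq V) (e : lexpr) : V :=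
  match e with
  | LAtom i => nth 0 atoms i
  | LScale c e => c *: leval atoms e
  | LAdd e1 e2 => leval atoms e1 + leval atoms e2
  | LOpp e => - leval atoms e
  | LZero => 0
  end.

Fixpoint lcoef (e : lexpr) (i : nat) : R :=
  match e with
  | LAtom j => if eqn i j then 1 else 0
  | LScale c e => c * lcoef e i
  | LAdd e1 e2 => lcoef e1 i + lcoef e2 i
  | LOpp e => - lcoef e i
  | LZero => 0
  end.

Lemma leval_sum atoms e :
  leval atoms e = \sum_(i < size atoms) lcoef e i *: atoms`_i.
Proof.
elim: e => [j|c e IH|e1 IH1 e2 IH2|e IH|] /=.
- under eq_bigr => i _ do rewrite eqnE.
  case: (ltnP j (size atoms)) => [lt_j|le_j].
    rewrite (bigD1 (Ordinal lt_j)) //= eqxx scale1r big1 ?addr0 // => i.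
    by rewrite -val_eqE => /negbTE ->; rewrite scale0r.
  rewrite nth_default // big1 // => i _.
  by rewrite ltn_eqF ?scale0r // (leq_trans (ltn_ord i)).
- by rewrite IH scaler_sumr; apply: eq_bigr => i _; rewrite scalerA.
- by rewrite IH1 IH2 -big_split; apply: eq_bigr => i _; rewrite scalerDl.
- by rewrite IH -sumrN; apply: eq_bigr => i _; rewrite scaleNr.
- by rewrite big1 // => i _; rewrite scale0r.
Qed.

Fixpoint same_coefs (e1 e2 : lexpr) (idx : seq nat) : Prop :=
  if idx is i :: idx' then lcoef e1 i = lcoef e2 i /\ same_coefs e1 e2 idx' else True.

Lemma leval_eq atoms e1 e2 :
  same_coefs e1 e2 (iota 0 (size atoms)) -> leval atoms e1 = leval atoms e2.
Proof.
move=> same; rewrite !leval_sum; apply: eq_bigr => i _; congr (_ *: _).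
have : val i \in iota 0 (size atoms) by rewrite mem_iota /=.
elim: (iota 0 _) same => //= j idx IH [eq_j same].
by rewrite in_cons => /predU1P [-> | /(IH same)].
Qed.

End LinearCombination.

Ltac lin_mem x l :=
  match l with
  | nil => constr:(false)
  | ?y :: _ => let _ := match goal with _ => unify x y end in constr:(true)
  | _ :: ?l' => lin_mem x l'
  end.

Ltac lin_atoms t l :=
  lazymatch t with
  | GRing.add ?a ?b => let l1 := lin_atoms a l in lin_atoms b l1
  | GRing.opp ?a => lin_atoms a l
  | GRing.scale _ ?a => lin_atoms a l
  | GRing.zero => l
  | _ => lazymatch lin_mem t l with true => l | false => constr:(t :: l) end
  end.

Ltac lin_index x l n :=
  match l with
  | ?y :: _ => let _ := match goal with _ => unify x y end in constr:(n)
  | _ :: ?l' => lin_index x l' (S n)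
  end.

Ltac lin_reify R t l :=
  lazymatch t with
  | GRing.add ?a ?b =>
      let ea := lin_reify R a l in let eb := lin_reify R b l in constr:(@LAdd R ea eb)
  | GRing.opp ?a => let ea := lin_reify R a l in constr:(@LOpp R ea)
  | GRing.scale ?c ?a => let ea := lin_reify R a l in constr:(@LScale R c ea)
  | GRing.zero => constr:(@LZero R)
  | _ => let i := lin_index t l O in constr:(@LAtom R i)
  end.

(* Proves an identity between [R]-linear combinations of atoms of [V] by comparing
   coefficients.  Atoms are compared up to unification only, so products in an
   algebra must first be normalised by [alg_expand]. *)
Ltac lin_coefs R V :=
  lazymatch goal with
  | |- ?lhs = ?rhs =>
    let atoms := lin_atoms lhs (@nil V) in
    let atoms := lin_atoms rhs atoms in
    let elhs := lin_reify R lhs atoms in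
    let erhs := lin_reify R rhs atoms in
    change (@leval R V atoms elhs = @leval R V atoms erhs);
    apply: leval_eq; cbn [same_coefs lcoef iota size eqn]; repeat split
  end.

Lemma scaler_mull (R : pzSemiRingType) (A : lSemiAlgType R) (k : R) (x y : A) :
  k *: x * y = k *: (x * y).
Proof. by rewrite scalerAl. Qed.

Lemma scaler_mulr (R : pzSemiRingType) (A : semiAlgType R) (k : R) (x y : A) :
  x * (k *: y) = k *: (x * y).
Proof. by rewrite scalerAr. Qed.

Ltac alg_expand :=
  rewrite ?(mulrDl, mulrDr, mulrN, mulNr, mulr0, mul0r, scaler_mull, scaler_mulr,
            mulrA, scale0r, scaler0, addr0, add0r).

Lemma scomm_inv (F : fieldType) (A : algType F) (k ki x : A) (c : F) :
  c != 0 -> k * ki = 1 -> ki * k = 1 ->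
  k * x = c *: (x * k) -> ki * x = c^-1 *: (x * ki).
Proof.
move=> c_neq0 k_ki ki_k kx.
have xk : x * k = c^-1 *: (k * x) by rewrite kx scalerA mulVf // scale1r.
rewrite -[ki * x]mulr1 -k_ki mulrA -[ki * x * k]mulrA xk -scalerAr -scalerAl.
by rewrite mulrA ki_k mul1r.
Qed.

Section TwistedCommutator.
Variables (F : fieldType) (v : F).
Hypothesis v_neq0 : v != 0.
Variable A : algType F.
Local Notation w := v^-1.

Definition tcomm (x y : A) : A := - (x * y) + w *: (y * x).

Ltac lin := lin_coefs F A; first [ring | field; exact: v_neq0].

Lemma tcommNr x y : tcomm x (- y) = - tcomm x y.
Proof. by rewrite /tcomm mulrN mulNr scalerN opprD. Qed.

Lemma mulr_twist (kb x y P Q : A) (p q : F) :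
  kb * x = p *: (x * kb) + P -> kb * y = q *: (y * kb) + Q ->
  kb * (x * y) = (p * q) *: (x * y * kb) + (p *: (x * Q) + P * y).
Proof.
move=> kbx kby; rewrite mulrA kbx mulrDl -scalerAl -[x * kb * y]mulrA kby.
alg_expand; lin.
Qed.

Lemma tcomm_twist (kb x y P Q : A) (p q : F) :
  kb * x = p *: (x * kb) + P -> kb * y = q *: (y * kb) + Q ->
  kb * tcomm x y
  = (p * q) *: (tcomm x y * kb) + (w *: (q *: (y * P) + Q * x) - (p *: (x * Q) + P * y)).
Proof.
move=> kbx kby.
rewrite /tcomm mulrDr mulrN -scalerAr (mulr_twist kbx kby) (mulr_twist kby kbx).
alg_expand; lin.
Qed.

Lemma tcomm_scomm (kb x y : A) (p q : F) :
  kb * x = p *: (x * kb) -> kb * y = q *: (y * kb) ->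
  kb * tcomm x y = (p * q) *: (tcomm x y * kb).
Proof.
rewrite -[p *: _]addr0 -[q *: _]addr0 => kbx kby.
rewrite (tcomm_twist kbx kby); alg_expand; lin.
Qed.

Lemma tcomm_comm_twist (kb ki x y z : A) (c : F) :
  kb * x = x * kb -> ki * x = x * ki -> kb * y = c *: (y * kb) + z * ki ->
  kb * tcomm x y = c *: (tcomm x y * kb) + tcomm x z * ki.
Proof.
rewrite -[x * kb]scale1r -[1 *: _]addr0 => kbx kix kby.
rewrite (tcomm_twist kbx kby) /tcomm; alg_expand.
rewrite -[z * ki * x]mulrA kix mulrA; lin.
Qed.

Lemma tcomm_left_base (kb ki eb e y : A) (s : F) :
  kb * e = v *: (e * kb) + eb * ki -> kb * y = s *: (y * kb) -> ki * y = y * ki ->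
  kb * tcomm e y
  = (s * v) *: (tcomm e y * kb) - eb * y * ki + (s * w) *: (y * eb * ki).
Proof.
rewrite -[s *: _]addr0 => kbe kby kiy.
rewrite (tcomm_twist kbe kby) /tcomm; alg_expand.
rewrite -[eb * ki * y]mulrA kiy mulrA; lin.
Qed.

Lemma tcomm_left_step (kb ki eb x x' y : A) (s : F) :
  kb * x = v *: (x * kb) - eb * x' * ki + w *: (x' * eb * ki) ->
  kb * y = s *: (y * kb) -> ki * y = y * ki -> eb * y = s *: (y * eb) ->
  kb * tcomm x y
  = (s * v) *: (tcomm x y * kb) - eb * tcomm x' y * ki + (s * w) *: (tcomm x' y * eb * ki).
Proof.
rewrite -addrA -[s *: (y * kb)]addr0 => kbx kby kiy eby.
rewrite (tcomm_twist kbx kby) /tcomm; alg_expand.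
rewrite -[eb * x' * ki * y]mulrA kiy mulrA -[x' * eb * ki * y]mulrA kiy mulrA.
rewrite -[x' * eb * y]mulrA eby; alg_expand; lin.
Qed.

Lemma tcomm_inner (kb ki x x' y y' : A) (s : F) :
  kb * x = w *: (x * kb) - x' * ki -> kb * y = (s * v) *: (y * kb) + y' * ki ->
  ki * x = v *: (x * ki) -> ki * y = w *: (y * ki) ->
  x * y' - v *: (y' * x) = x' * y - (s * v) *: (y * x') ->
  kb * tcomm x y = s *: (tcomm x y * kb).
Proof.
move=> kbx kby kix kiy serre.
have xy' : x * y' = x' * y - (s * v) *: (y * x') + v *: (y' * x) by rewrite -serre subrK.
rewrite (tcomm_twist kbx kby) /tcomm; alg_expand.
rewrite -[y' * ki * x]mulrA kix -[x' * ki * y]mulrA kiy xy'; alg_expand; lin.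
Qed.

Lemma tcomm_serre (x y y' z z' : A) (c d : F) :
  x * z = z * x -> x * z' = z' * x ->
  y * z - c *: (z * y) = y' * z' - d *: (z' * y') ->
  tcomm x y * z - c *: (z * tcomm x y) = tcomm x y' * z' - d *: (z' * tcomm x y').
Proof.
move=> xz xz' serre.
have expand (t u : A) (b : F) : x * u = u * x ->
    tcomm x t * u - b *: (u * tcomm x t)
    = - (x * (t * u - b *: (u * t))) + w *: ((t * u - b *: (u * t)) * x).
  move=> xu; rewrite /tcomm; alg_expand.
  rewrite -xu -[t * x * u]mulrA xu !mulrA; lin.
by rewrite !expand // serre.
Qed.

End TwistedCommutator.

Lemma qv_neq0 : qv != 0.
Proof. by rewrite tofrac_eq0 polyX_eq0. Qed.

Lemma Eij_Eroot (A : algType Qv) (E : nat -> A) i k : Eij E i (i + k.+1) = Eroot E i k.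
Proof. by rewrite /Eij addKn. Qed.

Lemma Ebij_Ebroot (A : algType Qv) (E Eb : nat -> A) i k :
  Ebij E Eb i (i + k.+1) = Ebroot E Eb i k.
Proof. by rewrite /Ebij addKn. Qed.

Section QueerRootVectors.
Variables (A : algType Qv) (n : nat) (K Ki Kb E Eb F Fb : nat -> A).
Hypothesis rels : qqn_rels n K Ki Kb E Eb F Fb.
Local Notation X := (Eroot E).
Local Notation Y := (Ebroot E Eb).
Local Notation T := (tcomm qv).

Lemma Eroot_tcomm i k : X i k.+1 = T (X i k) (E (i + k.+1)). Proof. by []. Qed.
(* [Ebroot] is a fixpoint on [i], so it only unfolds once [i] is a constructor. *)
Lemma Ebroot_tcomm i k : Y i k.+1 = T (X i k) (Eb (i + k.+1)). Proof. by case: i. Qed.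
Lemma Ebroot0 i : Y i 0 = Eb i. Proof. by case: i. Qed.

Lemma Kb_E_far a m : (1 <= a <= n)%N -> (1 <= m <= n.-1)%N -> m != a -> m.+1 != a ->
  Kb a * E m = E m * Kb a.
Proof. by move=> ha hm ne1 ne2; case: (qq3_9 rels ha hm ne1 ne2). Qed.

Lemma Kb_Eb_far a m : (1 <= a <= n)%N -> (1 <= m <= n.-1)%N -> m != a -> m.+1 != a ->
  Kb a * Eb m = - (Eb m * Kb a).
Proof. by move=> ha hm ne1 ne2; case: (qq3_9 rels ha hm ne1 ne2). Qed.

Lemma Kb_E_self a : (1 <= a <= n.-1)%N -> Kb a * E a = qv *: (E a * Kb a) + Eb a * Ki a.
Proof. by move=> ha; rewrite -(qq3_1 rels ha) addrC subrK. Qed.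

Lemma Kb_Eb_self a : (1 <= a <= n.-1)%N ->
  Kb a * Eb a = - (qv *: (Eb a * Kb a)) + E a * Ki a.
Proof. by move=> ha; rewrite -(qq3_5 rels ha) addrC addrK. Qed.

Lemma Ki_scomm a (x : A) (z : int) : (1 <= a <= n)%N ->
  K a * x = qv ^ z *: (x * K a) -> Ki a * x = qv ^ (- z) *: (x * Ki a).
Proof.
move=> ha; have [K_Ki Ki_K] := qq1_inv rels ha.
by rewrite -invr_expz; apply: scomm_inv; rewrite // expfz_neq0 // qv_neq0.
Qed.

Lemma Ki_E_far a m : (1 <= a <= n)%N -> (1 <= m <= n.-1)%N -> a != m -> a != m.+1 ->
  Ki a * E m = E m * Ki a.
Proof.
move=> ha hm ne1 ne2; rewrite (Ki_scomm ha (qq2_E rels ha hm)).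
by rewrite /epsal (negbTE ne1) (negbTE ne2) expr0z scale1r.
Qed.

Lemma Ki_Eb_far a m : (1 <= a <= n)%N -> (1 <= m <= n.-1)%N -> a != m -> a != m.+1 ->
  Ki a * Eb m = Eb m * Ki a.
Proof.
move=> ha hm ne1 ne2; rewrite (Ki_scomm ha (qq2_Eb rels ha hm)).
by rewrite /epsal (negbTE ne1) (negbTE ne2) expr0z scale1r.
Qed.

Lemma Ki_E_self a : (1 <= a <= n.-1)%N -> Ki a * E a = qv^-1 *: (E a * Ki a).
Proof.
move=> hm; have ha : (1 <= a <= n)%N by lia.
by rewrite (Ki_scomm ha (qq2_E rels ha hm)) /epsal eqxx ltn_eqF.
Qed.

Lemma Ki_Eb_self a : (1 <= a <= n.-1)%N -> Ki a * Eb a = qv^-1 *: (Eb a * Ki a).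
Proof.
move=> hm; have ha : (1 <= a <= n)%N by lia.
by rewrite (Ki_scomm ha (qq2_Eb rels ha hm)) /epsal eqxx ltn_eqF.
Qed.

Lemma Ki_E_prev b : (1 <= b)%N -> (b < n)%N -> Ki b.+1 * E b = qv *: (E b * Ki b.+1).
Proof.
move=> hb hbn; have ha : (1 <= b.+1 <= n)%N by lia.
have hm : (1 <= b <= n.-1)%N by lia.
by rewrite (Ki_scomm ha (qq2_E rels ha hm)) /epsal eqxx gtn_eqF.
Qed.

Lemma Ki_Eb_prev b : (1 <= b)%N -> (b < n)%N -> Ki b.+1 * Eb b = qv *: (Eb b * Ki b.+1).
Proof.
move=> hb hbn; have ha : (1 <= b.+1 <= n)%N by lia.
have hm : (1 <= b <= n.-1)%N by lia.
by rewrite (Ki_scomm ha (qq2_Eb rels ha hm)) /epsal eqxx gtn_eqF.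
Qed.

Lemma Kb_E_prev b : (1 <= b)%N -> (b < n)%N ->
  Kb b.+1 * E b = qv^-1 *: (E b * Kb b.+1) - Eb b * Ki b.+1.
Proof.
move=> hb hbn; have ha : (2 <= b.+1 <= n)%N by lia.
have := qq3_2 rels ha; rewrite /= (Ki_Eb_prev hb hbn) => q3.
apply: (scalerI qv_neq0); rewrite scalerBr scalerA mulfV ?qv_neq0 // scale1r.
by rewrite -q3 addrC subrK.
Qed.

Lemma Kb_Eb_prev b : (1 <= b)%N -> (b < n)%N ->
  Kb b.+1 * Eb b = - (qv^-1 *: (Eb b * Kb b.+1)) + E b * Ki b.+1.
Proof.
move=> hb hbn; have ha : (2 <= b.+1 <= n)%N by lia.
have := qq3_6 rels ha; rewrite /= (Ki_E_prev hb hbn) => q6.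
apply: (scalerI qv_neq0); rewrite scalerDr scalerN scalerA mulfV ?qv_neq0 // scale1r.
by rewrite -q6 addrC addrK.
Qed.

Lemma E_Eb_comm m l : (1 <= m <= n.-1)%N -> (1 <= l <= n.-1)%N -> m != l.+1 -> l != m.+1 ->
  E m * Eb l = Eb l * E m.
Proof. by move=> hm hl ne1 ne2; case: (qq5_EEb rels hm hl ne1 ne2). Qed.

Lemma E_E_far m l : (1 <= m <= n.-1)%N -> (1 <= l <= n.-1)%N ->
  (m.+1 < l)%N || (l.+1 < m)%N -> E m * E l = E l * E m.
Proof. by move=> hm hl far; case: (qq5_far rels hm hl far). Qed.

Lemma Eb_Eb_far m l : (1 <= m <= n.-1)%N -> (1 <= l <= n.-1)%N ->
  (m.+1 < l)%N || (l.+1 < m)%N -> Eb m * Eb l = - (Eb l * Eb m).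
Proof. by move=> hm hl far; case: (qq5_far rels hm hl far). Qed.

Lemma Eroot_scomm (y : A) (c : Qv) i k :
  (forall m, (i <= m < i + k)%N -> y * E m = E m * y) ->
  y * E (i + k) = c *: (E (i + k) * y) -> y * X i k = c *: (X i k * y).
Proof.
elim: k c => [|k IH] c below top; first by rewrite addn0 in top.
rewrite Eroot_tcomm -[c]mul1r; apply: tcomm_scomm top.
by apply: IH => [m hm|]; rewrite ?scale1r; apply: below; lia.
Qed.

Lemma Eroot_comm (y : A) i k :
  (forall m, (i <= m <= i + k)%N -> y * E m = E m * y) -> y * X i k = X i k * y.
Proof.
move=> comm; rewrite -[X i k * y]scale1r.
by apply: Eroot_scomm => [m hm|]; rewrite ?scale1r; apply: comm; lia.
Qed.

Lemma Ebroot_scomm (y : A) (c : Qv) i k :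
  (forall m, (i <= m < i + k)%N -> y * E m = E m * y) ->
  y * Eb (i + k) = c *: (Eb (i + k) * y) -> y * Y i k = c *: (Y i k * y).
Proof.
case: k => [|k] below top; first by rewrite addn0 in top; rewrite Ebroot0.
rewrite Ebroot_tcomm -[c]mul1r; apply: tcomm_scomm top.
by rewrite scale1r; apply: Eroot_comm => m hm; apply: below; lia.
Qed.

Lemma Kb_Eroot_right i k : (1 <= i)%N -> (i + k.+1 <= n)%N ->
  Kb (i + k.+1) * X i k = qv^-1 *: (X i k * Kb (i + k.+1)) - Y i k * Ki (i + k.+1).
Proof.
case: k => [|k] hi hn; first by rewrite Ebroot0 addn1; apply: Kb_E_prev; lia.
rewrite Eroot_tcomm Ebroot_tcomm [(i + k.+2)%N]addnS -mulNr -tcommNr.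
apply: tcomm_comm_twist; last by rewrite mulNr; apply: Kb_E_prev; lia.
  by apply: Eroot_comm => m hm; apply: Kb_E_far; lia.
by apply: Eroot_comm => m hm; apply: Ki_E_far; lia.
Qed.

Lemma Kb_Ebroot_right i k : (1 <= i)%N -> (i + k.+1 <= n)%N ->
  Kb (i + k.+1) * Y i k = - (qv^-1 *: (Y i k * Kb (i + k.+1))) + X i k * Ki (i + k.+1).
Proof.
case: k => [|k] hi hn; first by rewrite Ebroot0 addn1; apply: Kb_Eb_prev; lia.
rewrite Eroot_tcomm Ebroot_tcomm [(i + k.+2)%N]addnS -scaleNr.
apply: tcomm_comm_twist; last by rewrite scaleNr; apply: Kb_Eb_prev; lia.
  by apply: Eroot_comm => m hm; apply: Kb_E_far; lia.
by apply: Eroot_comm => m hm; apply: Ki_E_far; lia.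
Qed.

Lemma Ki_Eroot_right i k : (1 <= i)%N -> (i + k.+1 <= n)%N ->
  Ki (i + k.+1) * X i k = qv *: (X i k * Ki (i + k.+1)).
Proof.
move=> hi hn; apply: Eroot_scomm => [m hm|]; first by apply: Ki_E_far; lia.
by rewrite addnS; apply: Ki_E_prev; lia.
Qed.

Lemma Eroot_Eb_serre i k : (1 <= i)%N -> (i + k.+2 <= n)%N ->
  X i k * Eb (i + k.+1) - qv *: (Eb (i + k.+1) * X i k)
  = Y i k * E (i + k.+1) - qv *: (E (i + k.+1) * Y i k).
Proof.
case: k => [|k] hi hn; first by rewrite Ebroot0 addn1; apply: (qq5_2 rels); lia.
rewrite Eroot_tcomm Ebroot_tcomm [(i + k.+2)%N]addnS.
apply: tcomm_serre; last by apply: (qq5_2 rels); lia.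
  by apply/esym/Eroot_comm => m hm; rewrite E_Eb_comm //; lia.
by apply/esym/Eroot_comm => m hm; rewrite E_E_far //; lia.
Qed.

Lemma Eroot_E_serre i k : (1 <= i)%N -> (i + k.+2 <= n)%N ->
  X i k * E (i + k.+1) - qv *: (E (i + k.+1) * X i k)
  = Y i k * Eb (i + k.+1) + qv *: (Eb (i + k.+1) * Y i k).
Proof.
rewrite -[qv *: (Eb _ * _)]opprK -[- (qv *: (Eb _ * _))]scaleNr.
case: k => [|k] hi hn.
  by rewrite Ebroot0 addn1 scaleNr opprK; apply: (qq5_1 rels); lia.
rewrite Eroot_tcomm Ebroot_tcomm [(i + k.+2)%N]addnS.
apply: tcomm_serre; last by rewrite scaleNr opprK; apply: (qq5_1 rels); lia.
  by apply/esym/Eroot_comm => m hm; rewrite E_E_far //; lia.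
by apply/esym/Eroot_comm => m hm; rewrite E_Eb_comm //; lia.
Qed.

Lemma Kb_Eroot_left i k : (1 <= i)%N -> (i + k.+2 <= n)%N ->
  Kb i * X i k.+1
  = qv *: (X i k.+1 * Kb i) - Eb i * X i.+1 k * Ki i + qv^-1 *: (X i.+1 k * Eb i * Ki i).
Proof.
move=> hi; elim: k => [|k IH] hn.
  rewrite Eroot_tcomm addn1.
  rewrite (tcomm_left_base (s := 1) (ki := Ki i) (eb := Eb i)).
    by rewrite !mul1r.
  - by apply: Kb_E_self; lia.
  - by rewrite scale1r; apply: Kb_E_far; lia.
  - by apply: Ki_E_far; lia.
rewrite Eroot_tcomm [X i.+1 k.+1]Eroot_tcomm addSnnS.
rewrite (tcomm_left_step (s := 1) (ki := Ki i) (eb := Eb i) (x' := X i.+1 k)).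
  by rewrite !mul1r.
- by apply: IH; lia.
- by rewrite scale1r; apply: Kb_E_far; lia.
- by apply: Ki_E_far; lia.
- by rewrite scale1r E_Eb_comm //; lia.
Qed.

Lemma Kb_Ebroot_left i k : (1 <= i)%N -> (i + k.+2 <= n)%N ->
  Kb i * Y i k.+1
  = - (qv *: (Y i k.+1 * Kb i)) - Eb i * Y i.+1 k * Ki i - qv^-1 *: (Y i.+1 k * Eb i * Ki i).
Proof.
case: k => [|k] hi hn.
  rewrite Ebroot_tcomm Ebroot0 addn1.
  rewrite (tcomm_left_base (s := -1) (ki := Ki i) (eb := Eb i)).
    by rewrite !mulN1r !scaleNr.
  - by apply: Kb_E_self; lia.
  - by rewrite scaleN1r; apply: Kb_Eb_far; lia.
  - by apply: Ki_Eb_far; lia.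
rewrite Ebroot_tcomm [Y i.+1 k.+1]Ebroot_tcomm addSnnS.
rewrite (tcomm_left_step (s := -1) (ki := Ki i) (eb := Eb i) (x' := X i.+1 k)).
  by rewrite !mulN1r !scaleNr.
- by apply: Kb_Eroot_left; lia.
- by rewrite scaleN1r; apply: Kb_Eb_far; lia.
- by apply: Ki_Eb_far; lia.
- by rewrite scaleN1r Eb_Eb_far //; lia.
Qed.

Lemma Kb_Eroot_inner i k a : (1 <= i)%N -> (i + k.+1 <= n)%N -> (i < a < i + k.+1)%N ->
  Kb a * X i k = X i k * Kb a.
Proof.
move=> hi; elim: k => [|k IH] hn ha; first lia.
rewrite Eroot_tcomm -[_ * Kb a]scale1r.
have [lt_a | ->] : (a < i + k.+1)%N \/ a = (i + k.+1)%N by lia.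
  rewrite -[1]mulr1; apply: tcomm_scomm; rewrite scale1r; [apply: IH | apply: Kb_E_far]; lia.
apply: (tcomm_inner qv_neq0 (x' := Y i k) (y' := Eb (i + k.+1)) (ki := Ki (i + k.+1))).
- by apply: Kb_Eroot_right; lia.
- by rewrite mul1r; apply: Kb_E_self; lia.
- by apply: Ki_Eroot_right; lia.
- by apply: Ki_E_self; lia.
- by rewrite mul1r; apply: Eroot_Eb_serre; lia.
Qed.

Lemma Kb_Ebroot_inner i k a : (1 <= i)%N -> (i + k.+1 <= n)%N -> (i < a < i + k.+1)%N ->
  Kb a * Y i k = - (Y i k * Kb a).
Proof.
case: k => [|k] hi hn ha; first lia.
rewrite Ebroot_tcomm -scaleN1r.
have [lt_a | ->] : (a < i + k.+1)%N \/ a = (i + k.+1)%N by lia.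
  rewrite -[-1]mul1r; apply: tcomm_scomm.
    by rewrite scale1r; apply: Kb_Eroot_inner; lia.
  by rewrite scaleN1r; apply: Kb_Eb_far; lia.
apply: (tcomm_inner qv_neq0 (x' := Y i k) (y' := E (i + k.+1)) (ki := Ki (i + k.+1))).
- by apply: Kb_Eroot_right; lia.
- by rewrite mulN1r scaleNr; apply: Kb_Eb_self; lia.
- by apply: Ki_Eroot_right; lia.
- by apply: Ki_Eb_self; lia.
- by rewrite mulN1r scaleNr opprK; apply: Eroot_E_serre; lia.
Qed.

Lemma Kb_Eroot_comm i k a : (1 <= i)%N -> (i + k.+1 <= n)%N -> (1 <= a <= n)%N ->
  (a < i)%N \/ (i < a < i + k.+1)%N \/ (i + k.+1 < a)%N -> Kb a * X i k = X i k * Kb a.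
Proof.
move=> hi hn ha a_ne; case: (boolP (i < a < i + k.+1)%N) => [inner | not_inner].
  exact: Kb_Eroot_inner.
by apply: Eroot_comm => m hm; apply: Kb_E_far; lia.
Qed.

Lemma Kb_Ebroot_comm i k a : (1 <= i)%N -> (i + k.+1 <= n)%N -> (1 <= a <= n)%N ->
  (a < i)%N \/ (i < a < i + k.+1)%N \/ (i + k.+1 < a)%N -> Kb a * Y i k = - (Y i k * Kb a).
Proof.
move=> hi hn ha a_ne; case: (boolP (i < a < i + k.+1)%N) => [inner | not_inner].
  exact: Kb_Ebroot_inner.
rewrite -scaleN1r; apply: Ebroot_scomm => [m hm|]; first by apply: Kb_E_far; lia.
by rewrite scaleN1r; apply: Kb_Eb_far; lia.
Qed.

End QueerRootVectors.

Theorem lemma2p7 (A : algType Qv) (n : nat) (K Ki Kb E Eb F Fb : nat -> A) :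
  qqn_rels n K Ki Kb E Eb F Fb ->
  forall i j a : nat, (1 <= i)%N -> (i < j)%N -> (j <= n)%N -> (1 <= a <= n)%N ->
  let Eij := Eij E in let Ebij := Ebij E Eb in
  [/\ ((a < i)%N \/ (i < a < j)%N \/ (j < a)%N ->
         Kb a * Eij i j = Eij i j * Kb a),
      (a = i -> (i.+1 < j)%N ->
         Kb a * Eij i j = qv *: (Eij i j * Kb i) - Eb i * Eij i.+1 j * Ki i
                          + qv^-1 *: (Eij i.+1 j * Eb i * Ki i)) &
      (a = j ->
         Kb a * Eij i j = qv^-1 *: (Eij i j * Kb j) - Ebij i j * Ki j)] /\
  [/\ ((a < i)%N \/ (i < a < j)%N \/ (j < a)%N ->
         Kb a * Ebij i j = - (Ebij i j * Kb a)),
      (a = i -> (i.+1 < j)%N ->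
         Kb a * Ebij i j = - (qv *: (Ebij i j * Kb i)) - Eb i * Ebij i.+1 j * Ki i
                           - qv^-1 *: (Ebij i.+1 j * Eb i * Ki i)) &
      (a = j ->
         Kb a * Ebij i j = - (qv^-1 *: (Ebij i j * Kb j)) + Eij i j * Ki j)].
Proof.
move=> rels i j a hi hij hjn ha /=.
have [k def_j] : exists k, j = (i + k.+1)%N by exists (j - i).-1; lia.
subst j.
rewrite Eij_Eroot Ebij_Ebroot.
split; split=> [a_ne | -> | ->].
- exact: (Kb_Eroot_comm rels).
- case: k hij hjn => [|k] _ hjn hk; first lia.
  by rewrite -addSnnS Eij_Eroot; apply: (Kb_Eroot_left rels).
- exact: (Kb_Eroot_right rels).
- exact: (Kb_Ebroot_comm rels).
- case: k hij hjn => [|k] _ hjn hk; first lia.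
  by rewrite -addSnnS Ebij_Ebroot; apply: (Kb_Ebroot_left rels).
- exact: (Kb_Ebroot_right rels).
Qed.
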